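(* With $X$, $Q$ as below, for every even $\ell>2$, \[\sum_{j=0}^{n_\ell-1}\mathrm{gap}^{X,Q}_{\ell,j}\ge\delta_\ell\ln(n_\ell)/2,\] where $\mathrm{gap}^{X,Q}_{\ell,j}$ denotes $\mathrm{gap}^{X,Q}_i$ for the index $i$ with $\vec x_i=\vec x_{\ell,j}$.
   Context: $X$ and $Q$ are indexed by layers $\ell\ge2$ and positions $0\le j\le n_\ell-1$, ordered lexicographically in $(\ell,j)$, with $\vec q_0=\vec0$ prepended to $Q$. $n_\ell:=\ell\lceil\ln^2\ell\rceil+1$, $\theta_\ell:=\frac{\pi}{2(n_\ell-1)}$, $\vec x_{\ell,j}:=(\cos(j\theta_\ell),\sin(j\theta_\ell))$ for even $\ell$ and $(\sin(j\theta_\ell),\cos(j\theta_\ell))$ for odd $\ell$. $\alpha:=\sum_{\ell=2}^\infty\frac1{\ell\ln^2\ell}$, $z_\ell:=\frac1\alpha\sum_{m=2}^\ell\frac1{m\ln^2m}$ ($z_1=0$), $\delta_\ell:=z_\ell-z_{\ell-1}=\frac1{\alpha\ell\ln^2\ell}$, $z_{\ell,j}:=1-\delta_\ell\cot((j+1)\theta_\ell)$ for $j<n_\ell-1$, $z_{\ell,n_\ell-1}:=1$. For even $\ell$, $\vec q_{\ell,j}:=(z_\ell,z_{\ell,j})$; for odd $\ell$, $\vec q_{\ell,j}$ is any maximizer of $\vec x_{\ell,j}\cdot\vec q_{\ell',j'}$ over $(\ell',j')$ with $\ell'<\ell$. For a sequence $X=(\vec x_i)$ and $Q=(\vec q_i)_{i\ge0}$,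 $\mathrm{gap}_i^{X,Q}:=\min_{0\le j<i}(\vec q_i-\vec q_j)\cdot\vec x_i$. *)

From Stdlib Require Import Reals Lra Lia List.
From Coquelicot Require Import Coquelicot.
Import ListNotations.
Open Scope R_scope.

(* ceiling of a real: up x is the least integer > x, so floor x = up x - 1
   and ceil x = - floor (- x) = 1 - up (- x). *)
Definition ceilZ (x : R) : Z := (1 - up (- x))%Z.

Definition nl (l : nat) : nat :=
  (l * Z.to_nat (ceilZ (ln (INR l) ^ 2)) + 1)%nat.

Definition theta (l : nat) : R := PI / (2 * INR (nl l - 1)).

Definition dot (u v : R * R) : R := fst u * fst v + snd u * snd v.

Definition xv (l j : nat) : R * R :=
  if Nat.even l then (cos (INR j * theta l), sin (INR j * theta l))
  else (sin (INR j * theta l), cos (INR j * theta l)).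

Definition tm (m : nat) : R :=
  if (2 <=? m)%nat then 1 / (INR m * ln (INR m) ^ 2) else 0.

Definition alpha : R := Series tm.

Fixpoint psum (l : nat) : R :=
  match l with
  | O => 0
  | S k => psum k + tm (S k)
  end.

Definition zl (l : nat) : R := psum l / alpha.

Definition delta (l : nat) : R := 1 / (alpha * INR l * ln (INR l) ^ 2).

Definition cot (x : R) : R := cos x / sin x.

Definition zlj (l j : nat) : R :=
  if (j <? nl l - 1)%nat then 1 - delta l * cot (INR (j + 1) * theta l) else 1.

Definition qeven (l j : nat) : R * R := (zl l, zlj l j).

(* Indices (l', j') strictly before (l, j) in lexicographic order,
   with l' >= 2 and j' < n_{l'}. *)
Definition earlier (l j : nat) : list (nat * nat) :=
  flat_map (fun l' => map (fun j' => (l', j')) (seq 0 (nl l')))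
           (seq 2 (l - 2))
  ++ map (fun j' => (l, j')) (seq 0 j).

(* gap at index (l,j): minimum over q_0 = 0 and all earlier q's of
   (q_{l,j} - q) . x_{l,j}. *)
Definition gap (Q : nat -> nat -> R * R) (l j : nat) : R :=
  let q := Q l j in
  let x := xv l j in
  fold_right (fun p m => Rmin (dot q x - dot (Q (fst p) (snd p)) x) m)
             (dot q x - dot (0, 0) x)
             (earlier l j).

Definition sumR (f : nat -> R) (n : nat) : R :=
  fold_right Rplus 0 (map f (seq 0 n)).

(* For even [l] every point [q] preceding layer [l] satisfies [fst q <= z_(l-1)] and
   [snd q <= 1] (odd layers only repeat earlier points), and [x_(l,j)] has nonnegative
   coordinates.  Hence the gap of [q_(l,j) = (z_l, z_(l,j))] against earlier layers is at
   least [delta_l cos(j theta) - (1 - z_(l,j)) sin(j theta)], and against earlier points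
   of its own layer at least [(z_(l,j) - z_(l,j')) sin(j theta)].  The choice
   [z_(l,j) = 1 - delta_l cot((j+1) theta)] makes both bounds at least
   [delta_l (cos(j theta) - cot((j+1) theta) sin(j theta)) = delta_l sin theta / sin((j+1) theta)],
   which is [>= delta_l / (2 (j+1))]; summing the harmonic series gives [delta_l ln(n_l) / 2]. *)
From Stdlib Require Import Reals Lra Lia List.
From Coquelicot Require Import Coquelicot.
Open Scope R_scope.

Lemma ln_pos x : 1 < x -> 0 < ln x.
Proof. intros Hx. rewrite <- ln_1. apply ln_increasing; lra. Qed.

Lemma ln_le_sub1 x : 0 < x -> ln x <= x - 1.
Proof.
  intros Hx. pose proof (exp_ineq1_le (ln x)) as H.
  rewrite exp_ln in H by lra. lra.
Qed.

Lemma ln_succ_sub_le x : 0 < x -> ln (x + 1) - ln x <= 1 / x.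
Proof.
  intros Hx. pose proof (ln_le_sub1 ((x + 1) / x) ltac:(apply Rdiv_lt_0_compat; lra)) as H.
  rewrite ln_div in H by lra.
  replace ((x + 1) / x - 1) with (1 / x) in H by (field; lra). exact H.
Qed.

Lemma ln_succ_sub_ge x : 0 < x -> 1 / (x + 1) <= ln (x + 1) - ln x.
Proof.
  intros Hx. pose proof (ln_le_sub1 (x / (x + 1)) ltac:(apply Rdiv_lt_0_compat; lra)) as H.
  rewrite ln_div in H by lra.
  replace (x / (x + 1) - 1) with (- (1 / (x + 1))) in H by (field; lra). lra.
Qed.

Lemma sin_ge_half x : 0 <= x <= 1 -> x / 2 <= sin x.
Proof.
  intros Hx. pose proof PI2_3_2.
  destruct (sin_bound x 0 ltac:(lra) ltac:(lra)) as [Hs _].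
  unfold sin_approx, sin_term in Hs; simpl in Hs.
  assert (0 <= x * (1 - x * x)) by (apply Rmult_le_pos; nra).
  lra.
Qed.

Lemma cos_sub_cot_mul_sin x y : sin x <> 0 -> cos y - cot x * sin y = sin (x - y) / sin x.
Proof. intros Hx. unfold cot. rewrite sin_minus. field. exact Hx. Qed.

Lemma cot_ge0 x : 0 < x <= PI / 2 -> 0 <= cot x.
Proof.
  intros Hx. pose proof PI_RGT_0. unfold cot.
  apply Rdiv_le_0_compat; [apply cos_ge_0 | apply sin_gt_0]; lra.
Qed.

Lemma cos_le_cot_mul_sin x y : 0 < x -> x <= y -> y <= PI / 2 -> cos y <= cot x * sin y.
Proof.
  intros Hx Hxy Hy. pose proof PI_RGT_0.
  assert (Hsx : 0 < sin x) by (apply sin_gt_0; lra).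
  assert (Hsxy : 0 <= sin (y - x)) by (apply sin_ge_0; lra).
  rewrite sin_minus in Hsxy. unfold cot.
  replace (cos x / sin x * sin y) with (cos y + (sin y * cos x - cos y * sin x) / sin x)
    by (field; lra).
  assert (0 <= (sin y * cos x - cos y * sin x) / sin x) by (apply Rdiv_le_0_compat; lra).
  lra.
Qed.

Lemma fold_right_Rmin_ge {A : Type} (f : A -> R) b L c :
  c <= b -> (forall p, In p L -> c <= f p) ->
  c <= fold_right (fun p m => Rmin (f p) m) b L.
Proof.
  intros Hb Hf. induction L as [|p L IH]; simpl; [exact Hb|].
  apply Rmin_glb; [apply Hf; now left|].
  apply IH. intros p' Hp'. apply Hf. now right.
Qed.

Lemma sumR_S f n : sumR f (S n) = sumR f n + f n.
Proof.
  unfold sumR. rewrite seq_S, map_app, fold_right_app. simpl.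
  generalize (map f (seq 0 n)). intros L.
  induction L as [|a L IH]; simpl; lra.
Qed.

Lemma sumR_le f g n : (forall j, (j < n)%nat -> f j <= g j) -> sumR f n <= sumR g n.
Proof.
  induction n as [|n IH]; intros H; [unfold sumR; simpl; lra|].
  rewrite !sumR_S. pose proof (H n ltac:(lia)).
  pose proof (IH ltac:(intros; apply H; lia)). lra.
Qed.

Lemma sumR_scal c f n : sumR (fun j => c * f j) n = c * sumR f n.
Proof. induction n as [|n IH]; [unfold sumR; simpl; lra|]. rewrite !sumR_S, IH. lra. Qed.

Lemma ln_le_harmonic m : ln (INR m + 1) <= sumR (fun j => 1 / (INR j + 1)) m.
Proof.
  induction m as [|m IH].
  - unfold sumR; simpl. rewrite Rplus_0_l, ln_1. lra.
  - rewrite sumR_S, S_INR. pose proof (pos_INR m).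
    pose proof (ln_succ_sub_le (INR m + 1) ltac:(lra)). lra.
Qed.

Lemma INR_ge2 m : (2 <= m)%nat -> 2 <= INR m.
Proof. intros Hm. apply le_INR in Hm. simpl in Hm. lra. Qed.

Lemma tm_ge0 m : 0 <= tm m.
Proof.
  unfold tm. destruct (2 <=? m)%nat eqn:E; [|lra].
  apply Nat.leb_le, INR_ge2 in E. pose proof (ln_pos (INR m) ltac:(lra)).
  apply Rlt_le, Rdiv_lt_0_compat; [lra|]. apply Rmult_lt_0_compat; [lra|]. apply pow_lt; lra.
Qed.

Lemma tm_ge2 m : (2 <= m)%nat -> tm m = 1 / (INR m * ln (INR m) ^ 2).
Proof. intros Hm. unfold tm. now rewrite (proj2 (Nat.leb_le 2 m) Hm). Qed.

Lemma tm2_pos : 0 < tm 2.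
Proof.
  rewrite tm_ge2 by lia. pose proof (ln_pos (INR 2) ltac:(simpl; lra)).
  apply Rdiv_lt_0_compat; [lra|]. apply Rmult_lt_0_compat; [simpl; lra|]. apply pow_lt; lra.
Qed.

Lemma psum_le a b : (a <= b)%nat -> psum a <= psum b.
Proof. induction 1 as [|b _ IH]; [lra|]. simpl. pose proof (tm_ge0 (S b)). lra. Qed.

Lemma psum_ge0 l : 0 <= psum l.
Proof. apply (psum_le 0). lia. Qed.

Lemma psum2 : psum 2 = tm 2.
Proof.
  simpl. replace (tm 1) with 0 by reflexivity. lra.
Qed.

Lemma tm_succ_le x : 2 <= x -> 1 / ((x + 1) * ln (x + 1) ^ 2) <= 1 / ln x - 1 / ln (x + 1).
Proof.
  intros Hx. pose proof (ln_pos x ltac:(lra)) as Ha.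
  assert (Hab : ln x < ln (x + 1)) by (apply ln_increasing; lra).
  pose proof (ln_succ_sub_ge x ltac:(lra)) as Hd.
  set (a := ln x) in *. set (b := ln (x + 1)) in *.
  replace (1 / a - 1 / b) with ((b - a) * (1 / (a * b))) by (field; lra).
  replace (1 / ((x + 1) * b ^ 2)) with ((1 / (x + 1)) * (1 / (b * b))) by (field; lra).
  apply Rmult_le_compat; [apply Rlt_le, Rdiv_lt_0_compat; lra
                         | apply Rlt_le, Rdiv_lt_0_compat; nra | exact Hd |].
  unfold Rdiv. rewrite !Rmult_1_l. apply Rinv_le_contravar; nra.
Qed.

(* Telescoping against [1 / ln m], which decreases by at least [tm m] at each step. *)
Lemma psum_add_inv_ln_le k : psum (k + 2) + 1 / ln (INR (k + 2)) <= tm 2 + 1 / ln 2.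
Proof.
  induction k as [|k IH].
  - replace (INR (0 + 2)) with 2 by (simpl; lra). rewrite Nat.add_0_l, psum2. lra.
  - replace (S k + 2)%nat with (S (k + 2)) by lia. simpl psum.
    rewrite tm_ge2, S_INR by lia.
    pose proof (tm_succ_le (INR (k + 2)) (INR_ge2 (k + 2) ltac:(lia))). lra.
Qed.

Lemma psum_bounded n : psum n <= tm 2 + 1 / ln 2.
Proof.
  pose proof (ln_pos 2 ltac:(lra)). pose proof tm2_pos.
  assert (0 < 1 / ln 2) by (apply Rdiv_lt_0_compat; lra).
  destruct (Nat.le_gt_cases 2 n) as [Hn | Hn].
  - replace n with ((n - 2) + 2)%nat by lia.
    pose proof (psum_add_inv_ln_le (n - 2)).
    pose proof (INR_ge2 (n - 2 + 2) ltac:(lia)).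
    pose proof (ln_pos (INR (n - 2 + 2)) ltac:(lra)).
    assert (0 < 1 / ln (INR (n - 2 + 2))) by (apply Rdiv_lt_0_compat; lra). lra.
  - pose proof (psum_le n 2 ltac:(lia)). rewrite psum2 in *. lra.
Qed.

Lemma alpha_pos : 0 < alpha.
Proof.
  unfold alpha, Series.
  assert (Hsum : forall N, sum_n tm N = psum N).
  { induction N as [|N IH]; [now rewrite sum_O|]. now rewrite sum_Sn, IH. }
  rewrite (Lim_seq_ext _ psum Hsum).
  assert (Hlo : Rbar_le (Lim_seq (fun _ => tm 2)) (Lim_seq psum)).
  { apply Lim_seq_le_loc. exists 2%nat. intros n Hn. rewrite <- psum2. now apply psum_le. }
  assert (Hhi : Rbar_le (Lim_seq psum) (Lim_seq (fun _ => tm 2 + 1 / ln 2))).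
  { apply Lim_seq_le_loc. exists 0%nat. intros n _. apply psum_bounded. }
  rewrite Lim_seq_const in Hlo, Hhi. pose proof tm2_pos.
  destruct (Lim_seq psum); simpl in *; [lra | contradiction | contradiction].
Qed.

Lemma ceilZ_ge1 x : 0 < x -> (1 <= Z.to_nat (ceilZ x))%nat.
Proof.
  intros Hx. unfold ceilZ. destruct (archimed (- x)) as [_ H].
  assert (up (- x) < 1)%Z by (apply lt_IZR; lra). lia.
Qed.

Lemma nl_ge l : (2 <= l)%nat -> (l + 1 <= nl l)%nat.
Proof.
  intros Hl. unfold nl.
  assert (0 < ln (INR l) ^ 2) by (apply pow_lt, ln_pos; pose proof (INR_ge2 l Hl); lra).
  pose proof (ceilZ_ge1 _ H). nia.
Qed.

Lemma theta_pos l : (2 <= l)%nat -> 0 < theta l.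
Proof.
  intros Hl. pose proof (nl_ge l Hl). unfold theta.
  apply Rdiv_lt_0_compat; [apply PI_RGT_0|].
  assert (0 < INR (nl l - 1)) by (apply lt_0_INR; lia). lra.
Qed.

Lemma theta_le1 l : (3 <= l)%nat -> theta l <= 1.
Proof.
  intros Hl. pose proof (nl_ge l ltac:(lia)). pose proof PI_RGT_0. pose proof PI_4.
  assert (3 <= INR (nl l - 1)) by (replace 3 with (INR 3) by (simpl; lra); apply le_INR; lia).
  unfold theta. apply Rle_trans with (PI / 6); [|lra].
  unfold Rdiv. apply Rmult_le_compat_l; [lra|]. apply Rinv_le_contravar; lra.
Qed.

Lemma angle_range l j : (2 <= l)%nat -> (j <= nl l - 1)%nat -> 0 <= INR j * theta l <= PI / 2.
Proof.
  intros Hl Hj. pose proof (nl_ge l Hl). pose proof (theta_pos l Hl).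
  assert (0 < INR (nl l - 1)) by (apply lt_0_INR; lia).
  apply le_INR in Hj. split; [apply Rmult_le_pos; [apply pos_INR | lra]|].
  apply Rle_trans with (INR (nl l - 1) * theta l); [apply Rmult_le_compat_r; lra|].
  unfold theta. right. field. lra.
Qed.

Lemma delta_pos l : (2 <= l)%nat -> 0 < delta l.
Proof.
  intros Hl. pose proof alpha_pos. pose proof (INR_ge2 l Hl).
  pose proof (ln_pos (INR l) ltac:(lra)). unfold delta.
  apply Rdiv_lt_0_compat; [lra|].
  apply Rmult_lt_0_compat; [apply Rmult_lt_0_compat; lra | apply pow_lt; lra].
Qed.

Lemma zl_ge0 l : 0 <= zl l.
Proof. pose proof alpha_pos. pose proof (psum_ge0 l). apply Rdiv_le_0_compat; lra. Qed.

Lemma zl_le a b : (a <= b)%nat -> zl a <= zl b.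
Proof.
  intros Hab. pose proof alpha_pos. unfold zl, Rdiv.
  apply Rmult_le_compat_r; [apply Rlt_le, Rinv_0_lt_compat; lra | now apply psum_le].
Qed.

Lemma zl_pred l : (2 <= l)%nat -> zl l = zl (l - 1) + delta l.
Proof.
  intros Hl. destruct l as [|l]; [lia|]. pose proof alpha_pos.
  pose proof (INR_ge2 _ Hl). pose proof (ln_pos (INR (S l)) ltac:(lra)).
  unfold zl, delta. replace (S l - 1)%nat with l by lia. simpl psum.
  rewrite tm_ge2 by lia. field. repeat split; lra.
Qed.

Lemma zlj_le1 l j : (2 <= l)%nat -> zlj l j <= 1.
Proof.
  intros Hl. unfold zlj. destruct (j <? nl l - 1)%nat eqn:E; [|lra].
  apply Nat.ltb_lt in E. pose proof (delta_pos l Hl). pose proof (theta_pos l Hl).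
  pose proof (angle_range l (j + 1) Hl ltac:(lia)).
  assert (0 < INR (j + 1) * theta l) by (apply Rmult_lt_0_compat; [apply lt_0_INR; lia | lra]).
  pose proof (cot_ge0 (INR (j + 1) * theta l) ltac:(lra)). nra.
Qed.

Lemma earlier_spec l j p : In p (earlier l j) ->
  ((2 <= fst p)%nat /\ (fst p < l)%nat /\ (snd p < nl (fst p))%nat) \/
  (fst p = l /\ (snd p < j)%nat).
Proof.
  unfold earlier. rewrite in_app_iff, in_flat_map, in_map_iff.
  intros [[l' [Hl' Hp]] | [j' [<- Hj']]].
  - apply in_seq in Hl'. apply in_map_iff in Hp. destruct Hp as [j' [<- Hj']].
    apply in_seq in Hj'. left. simpl. lia.
  - apply in_seq in Hj'. right. simpl. lia.
Qed.

Definition gap_minorant (l j : nat) : R :=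
  if (j <? nl l - 1)%nat then delta l * (sin (theta l) / sin (INR (j + 1) * theta l)) else 0.

Lemma gap_minorant_cot l j : (2 <= l)%nat -> (j < nl l - 1)%nat ->
  gap_minorant l j =
  delta l * (cos (INR j * theta l) - cot (INR (j + 1) * theta l) * sin (INR j * theta l)).
Proof.
  intros Hl Hj. pose proof (theta_pos l Hl). pose proof (angle_range l (j + 1) Hl ltac:(lia)).
  assert (0 < INR (j + 1) * theta l) by (apply Rmult_lt_0_compat; [apply lt_0_INR; lia | lra]).
  assert (0 < sin (INR (j + 1) * theta l)) by (apply sin_gt_0; pose proof PI_RGT_0; lra).
  unfold gap_minorant. rewrite (proj2 (Nat.ltb_lt _ _) Hj).
  rewrite cos_sub_cot_mul_sin by lra. do 3 f_equal. rewrite plus_INR. simpl. ring.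
Qed.

Lemma gap_minorant_ge l j : (3 <= l)%nat -> (j < nl l - 1)%nat ->
  delta l / 2 * (1 / (INR j + 1)) <= gap_minorant l j.
Proof.
  intros Hl Hj. pose proof (delta_pos l ltac:(lia)) as Hd. pose proof (theta_pos l ltac:(lia)).
  pose proof (theta_le1 l Hl). pose proof (angle_range l (j + 1) ltac:(lia) ltac:(lia)).
  unfold gap_minorant. rewrite (proj2 (Nat.ltb_lt _ _) Hj).
  rewrite plus_INR in *. simpl INR in *. pose proof (pos_INR j). pose proof PI_RGT_0.
  set (t := theta l) in *.
  assert (Ha : 0 < (INR j + 1) * t) by (apply Rmult_lt_0_compat; lra).
  assert (0 < sin ((INR j + 1) * t)) by (apply sin_gt_0; lra).
  assert (sin ((INR j + 1) * t) < (INR j + 1) * t) by (apply sin_lt_x; lra).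
  pose proof (sin_ge_half t ltac:(lra)).
  replace (delta l / 2 * (1 / (INR j + 1))) with (delta l * ((t / 2) / ((INR j + 1) * t)))
    by (field; lra).
  apply Rmult_le_compat_l; [lra|]. unfold Rdiv.
  apply Rmult_le_compat; [lra | apply Rlt_le, Rinv_0_lt_compat; lra | lra |].
  apply Rinv_le_contravar; lra.
Qed.

Lemma gap_minorant_le_prev_layer l j a b :
  (2 <= l)%nat -> (j < nl l)%nat -> a <= zl (l - 1) -> b <= 1 ->
  gap_minorant l j <= (zl l * cos (INR j * theta l) + zlj l j * sin (INR j * theta l))
                      - (a * cos (INR j * theta l) + b * sin (INR j * theta l)).
Proof.
  intros Hl Hj Ha Hb. pose proof (angle_range l j Hl ltac:(lia)). pose proof PI_RGT_0.
  assert (Hc : 0 <= cos (INR j * theta l)) by (apply cos_ge_0; lra).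
  assert (Hs : 0 <= sin (INR j * theta l)) by (apply sin_ge_0; lra).
  pose proof (zl_pred l Hl). pose proof (delta_pos l Hl).
  destruct (Nat.lt_ge_cases j (nl l - 1)) as [Hj' | Hj'].
  - rewrite gap_minorant_cot by assumption. unfold zlj.
    rewrite (proj2 (Nat.ltb_lt _ _) Hj').
    assert (0 <= (zl l - a - delta l) * cos (INR j * theta l)) by (apply Rmult_le_pos; lra).
    assert (0 <= (1 - b) * sin (INR j * theta l)) by (apply Rmult_le_pos; lra).
    lra.
  - unfold gap_minorant, zlj. rewrite (proj2 (Nat.ltb_ge _ _) Hj').
    assert (0 <= (zl l - a) * cos (INR j * theta l)) by (apply Rmult_le_pos; lra).
    assert (0 <= (1 - b) * sin (INR j * theta l)) by (apply Rmult_le_pos; lra).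
    lra.
Qed.

Lemma gap_minorant_le_same_layer l j j' : (2 <= l)%nat -> (j < nl l)%nat -> (j' < j)%nat ->
  gap_minorant l j <= (zlj l j - zlj l j') * sin (INR j * theta l).
Proof.
  intros Hl Hj Hj'. pose proof (angle_range l j Hl ltac:(lia)). pose proof PI_RGT_0.
  assert (Hs : 0 <= sin (INR j * theta l)) by (apply sin_ge_0; lra).
  pose proof (delta_pos l Hl). pose proof (theta_pos l Hl).
  destruct (Nat.lt_ge_cases j (nl l - 1)) as [Hjn | Hjn].
  - rewrite gap_minorant_cot by assumption. unfold zlj.
    rewrite (proj2 (Nat.ltb_lt _ _) Hjn), (proj2 (Nat.ltb_lt j' (nl l - 1)) ltac:(lia)).
    assert (cos (INR j * theta l) <= cot (INR (j' + 1) * theta l) * sin (INR j * theta l)).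
    { apply cos_le_cot_mul_sin; [| | lra].
      - apply Rmult_lt_0_compat; [apply lt_0_INR; lia | lra].
      - apply Rmult_le_compat_r; [lra | apply le_INR; lia]. }
    nra.
  - unfold gap_minorant. rewrite (proj2 (Nat.ltb_ge _ _) Hjn).
    pose proof (zlj_le1 l j' Hl). unfold zlj at 1. rewrite (proj2 (Nat.ltb_ge _ _) Hjn).
    apply Rmult_le_pos; lra.
Qed.

Section EvenLayerGaps.

Variable Q : nat -> nat -> R * R.

Hypothesis Q_even : forall l j, Nat.even l = true -> (2 <= l)%nat -> (j < nl l)%nat ->
  Q l j = qeven l j.

Hypothesis Q_odd_copies : forall l j, Nat.even l = false -> (2 <= l)%nat -> (j < nl l)%nat ->
  exists l' j', (2 <= l')%nat /\ (l' < l)%nat /\ (j' < nl l')%nat /\ Q l j = Q l' j'.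

Lemma Q_bounded l j : (2 <= l)%nat -> (j < nl l)%nat ->
  fst (Q l j) <= zl l /\ snd (Q l j) <= 1.
Proof.
  revert j. induction l as [l IH] using (well_founded_induction Nat.lt_wf_0). intros j Hl Hj.
  destruct (Nat.even l) eqn:E.
  - rewrite Q_even by assumption. simpl. split; [lra | now apply zlj_le1].
  - destruct (Q_odd_copies l j E Hl Hj) as [l' [j' [Hl' [Hll' [Hj' ->]]]]].
    destruct (IH l' Hll' j' Hl' Hj'). pose proof (zl_le l' l ltac:(lia)). split; lra.
Qed.

Lemma gap_minorant_le_gap l j : Nat.even l = true -> (2 <= l)%nat -> (j < nl l)%nat ->
  gap_minorant l j <= gap Q l j.
Proof.
  intros E Hl Hj. unfold gap.
  replace (xv l j) with (cos (INR j * theta l), sin (INR j * theta l)) by (unfold xv; now rewrite E).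
  rewrite Q_even by assumption. unfold qeven, dot. cbn [fst snd].
  apply fold_right_Rmin_ge.
  - pose proof (gap_minorant_le_prev_layer l j 0 0 Hl Hj (zl_ge0 _) ltac:(lra)). lra.
  - intros [l' j'] Hp. apply earlier_spec in Hp. cbn [fst snd] in *.
    destruct Hp as [[Hl' [Hll' Hj']] | [-> Hj']].
    + destruct (Q_bounded l' j' Hl' Hj').
      pose proof (zl_le l' (l - 1) ltac:(lia)).
      apply gap_minorant_le_prev_layer; auto; lra.
    + rewrite Q_even by (assumption || lia). unfold qeven. cbn [fst snd].
      pose proof (gap_minorant_le_same_layer l j j' Hl Hj Hj'). nra.
Qed.

End EvenLayerGaps.

Theorem corollary5p11 (Q : nat -> nat -> R * R)
  (Heven : forall l j, Nat.even l = true -> (2 <= l)%nat -> (j < nl l)%nat ->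
     Q l j = qeven l j)
  (Hodd : forall l j, Nat.even l = false -> (2 <= l)%nat -> (j < nl l)%nat ->
     (exists l' j', (2 <= l')%nat /\ (l' < l)%nat /\ (j' < nl l')%nat /\
                    Q l j = Q l' j') /\
     (forall l' j', (2 <= l')%nat -> (l' < l)%nat -> (j' < nl l')%nat ->
        dot (xv l j) (Q l' j') <= dot (xv l j) (Q l j))) :
  forall l : nat, Nat.even l = true -> (2 < l)%nat ->
    sumR (fun j => gap Q l j) (nl l) >= delta l * ln (INR (nl l)) / 2.
Proof.
  intros l E Hl. apply Rle_ge.
  pose proof (nl_ge l ltac:(lia)). pose proof (delta_pos l ltac:(lia)).
  apply Rle_trans with (sumR (gap_minorant l) (nl l)).
  2: { apply sumR_le. intros j Hj. apply (gap_minorant_le_gap Q Heven); auto; [|lia].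
       intros l' j' ? ? ?. now apply Hodd. }
  replace (nl l) with (S (nl l - 1)) at 2 by lia.
  rewrite sumR_S. unfold gap_minorant at 2. rewrite Nat.ltb_irrefl, Rplus_0_r.
  apply Rle_trans with (sumR (fun j => delta l / 2 * (1 / (INR j + 1))) (nl l - 1)).
  2: { apply sumR_le. intros j Hj. apply gap_minorant_ge; lia. }
  rewrite sumR_scal.
  pose proof (ln_le_harmonic (nl l - 1)) as Hh.
  replace (INR (nl l - 1) + 1) with (INR (nl l)) in Hh by (rewrite minus_INR by lia; simpl; lra).
  nra.
Qed.
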